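(* Let $k\ge1$ and $c\in\mathcal{S}_k^\alpha\setminus\{\mathbf{0}\}$. Then $w_{Hom}(c)=q^{s(k+1)-2}(q-1)$.
   Context: Let $R$ be a finite commutative chain ring with maximal ideal $\langle\gamma\rangle$, nilpotency index $s$ and residue field $R/\langle\gamma\rangle\cong\mathbb{F}_q$. Fix coset representatives $T=\{e_0,\dots,e_{q-1}\}$ with $e_0=0,e_1=1$, ordered $e_0<\dots<e_{q-1}$; each $r\in R$ is uniquely $\sum_{i=0}^{s-1}r_i\gamma^i$, $r_i\in T$; order $R$ by $x>y$ iff $x_i>y_i$ in $T$ for the largest $i$ with $x_i\neq y_i$; list $R=\{\rho_0,\dots,\rho_{q^s-1}\}$ increasingly. $\mathbf{a}^{(m)}$ is the constant vector of length $m$. Define $G_1^\alpha=(\rho_0\ \cdots\ \rho_{q^s-1})$ and, for $k>1$, $G_k^\alpha$ as the $k\times q^{sk}$ matrix of $q^s$ column blocks, the $j$-th having first row $\boldsymbol{\rho_j}^{(q^{s(k-1)})}$ and $G_{k-1}^\alpha$ below. $\mathcal{S}_k^\alpha$ is the $R$-submodule of $R^{q^{sk}}$ generated by the rows of $G_k^\alpha$. Homogeneous weight: for $x\in R$, $w_{Hom}(x)=0$ if $x=0$; $w_{Hom}(x)=(q-1)q^{s-2}$ if $x\neq0$ and $x\notin\langle\gamma^{s-1}\rangle$; $w_{Hom}(x)=q^{s-1}$ if $x\neq0$ and $x\in\langle\gamma^{s-1}\rangle$; extended to $R^n$ by summing over coordinates. *)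

From HB Require Import structures.
From mathcomp Require Import all_boot all_order all_algebra.
Set Implicit Arguments. Unset Strict Implicit. Unset Printing Implicit Defensive.
Import Order.TTheory GRing.Theory Num.Theory.
Local Open Scope ring_scope.

Section ChainRing.
Variable R : finComNzRingType.

Definition is_ideal (I : {set R}) : bool :=
  [&& (0 : R) \in I,
      [forall x in I, [forall y in I, x + y \in I]] &
      [forall r : R, [forall x in I, r * x \in I]]].

Definition pideal (a : R) : {set R} := [set x | [exists y : R, x == y * a]].

Definition chain_ring : Prop :=
  forall I J : {set R}, is_ideal I -> is_ideal J -> I \subset J \/ J \subset I.

Definition maximal_pideal (gamma : R) : Prop :=
  pideal gamma != [set: R] /\
  forall J : {set R}, is_ideal J -> pideal gamma \subset J ->
    J = pideal gamma \/ J = [set: R].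

Definition coset_reps (q : nat) (gamma : R) (e : 'I_q -> R) : Prop :=
  forall r : R, exists! i : 'I_q, r - e i \in pideal gamma.

(* dig r i is the index in T of the i-th gamma-adic digit of r *)
Definition gamma_digits (q s : nat) (gamma : R) (e : 'I_q -> R)
  (dig : R -> 'I_s -> 'I_q) : Prop :=
  forall r : R, r = \sum_(i < s) e (dig r i) * gamma ^+ i.

Definition Rlt (q s : nat) (dig : R -> 'I_s -> 'I_q) (x y : R) : bool :=
  [exists i : 'I_s,
     [forall j : 'I_s, (i < j)%N ==> (dig x j == dig y j)] &&
     (dig x i < dig y i)%N].

Definition wHom (q s : nat) (gamma : R) (x : R) : nat :=
  if x == 0 then 0%N
  else if x \in pideal (gamma ^+ s.-1) then (q ^ s.-1)%N
  else ((q - 1) * q ^ (s - 2))%N.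

Definition wHom_vec (q s : nat) (gamma : R) (n : nat) (c : 'rV[R]_n) : nat :=
  (\sum_(j < n) wHom q s gamma (c ord0 j))%N.

(* entries of G_k^alpha: Gent rhos k i c is the entry in row i, column c
   (both 0-indexed); rho_j = nth 0 rhos j.  Column block j of G_{k+1} is
   columns j*N^k .. (j+1)*N^k - 1, with first row rho_j and G_k below. *)
Fixpoint Gent (rhos : seq R) (k : nat) : nat -> nat -> R :=
  match k with
  | 0 => fun _ _ => 0
  | k'.+1 => fun i c =>
      match i with
      | 0 => nth 0 rhos (c %/ (#|R| ^ k'))
      | i'.+1 => Gent rhos k' i' (c %% (#|R| ^ k'))
      end
  end.

Definition Gmx (rhos : seq R) (k : nat) : 'M[R]_(k, #|R| ^ k) :=
  \matrix_(i < k, j < #|R| ^ k) Gent rhos k i j.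

Definition Scode (rhos : seq R) (k : nat) : {set 'rV[R]_(#|R| ^ k)} :=
  [set c | [exists a : 'rV[R]_k, c == a *m Gmx rhos k]].

End ChainRing.

(* Writing c = a G_k, the columns of G_k run exactly once through R^k, so
   w(c) is the total weight of the values of the linear form x |-> a x on R^k.
   This form takes every value of its image I, a nonzero ideal, exactly
   |R|^k / |I| times.  In the chain ring R every nonzero ideal contains the
   minimal ideal <gamma^(s-1)>, which has q elements, and |R| = q^s; hence the
   weights over I sum to (q-1) q^(s-2) |I|, and w(c) = q^(sk) (q-1) q^(s-2). *)

From HB Require Import structures.
From mathcomp Require Import all_boot all_order all_algebra.
From mathcomp Require Import zify.
Set Implicit Arguments.
Unset Strict Implicit.
Unset Printing Implicit Defensive.

Import Order.TTheory GRing.Theory Num.Theory.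
Local Open Scope ring_scope.

Lemma sum_fibers (V W : finZmodType) (f : V -> W) (F : W -> nat) :
  {morph f : u v / u + v} ->
  (\sum_u F (f u) = #|[set u | f u == 0%R]| * \sum_(w in f @: setT) F w)%N.
Proof.
move=> fD; have fB u v : f (u - v) = f u - f v.
  by apply: (addIr (f v)); rewrite -fD !subrK.
rewrite (eq_bigl [in setT]) => [|u]; last by rewrite !inE.
rewrite (partition_big_imset f) big_distrr /=.
apply: eq_bigr => _ /imsetP[u0 _ ->].
rewrite (eq_bigr (fun=> F (f u0))) => [|u /andP[_ /eqP->] //].
rewrite sum_nat_const; congr (_ * _)%N.
rewrite -[RHS](card_imset _ (addIr u0)); apply: eq_card => u; rewrite {1}unfold_in in_setT /=.
apply/eqP/imsetP => [fu|[v]]; last by rewrite inE => /eqP fv ->; rewrite fD fv add0r.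
by exists (u - u0); rewrite ?subrK // inE fB fu subrr.
Qed.

Section Ideals.
Variable R : finComNzRingType.
Implicit Types (a r x y z : R) (I : {set R}).

Lemma pidealP a x : reflect (exists y, x = y * a) (x \in pideal a).
Proof. by rewrite inE; apply: (iffP existsP) => [[y /eqP ->]|[y ->]]; exists y. Qed.

Lemma idealP I :
  reflect [/\ 0 \in I, {in I &, forall x y, x + y \in I} &
              forall r, {in I, forall x, r * x \in I}]
          (is_ideal I).
Proof.
apply: (iffP and3P) => [[I0 /forall_inP ID /forallP IM]|[I0 ID IM]].
  split=> // [x y /ID /forall_inP|r x]; first exact.
  by move/forall_inP: (IM r); apply.
split=> //; first by apply/forall_inP => x Ix; apply/forall_inP => y; apply: ID.
by apply/forallP => r; apply/forall_inP => x; apply: IM.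
Qed.

Lemma ideal0 I : is_ideal I -> 0 \in I.
Proof. by case/idealP. Qed.

Lemma idealMl I r x : is_ideal I -> x \in I -> r * x \in I.
Proof. by case/idealP => _ _; apply. Qed.

Lemma pideal_is_ideal a : is_ideal (pideal a).
Proof.
apply/idealP; split=> [|_ _ /pidealP[u ->] /pidealP[v ->]|r _ /pidealP[u ->]].
- by apply/pidealP; exists 0; rewrite mul0r.
- by apply/pidealP; exists (u + v); rewrite mulrDl.
- by apply/pidealP; exists (r * u); rewrite mulrA.
Qed.

Lemma pideal_subset I a : is_ideal I -> a \in I -> pideal a \subset I.
Proof. by move=> I_ideal aI; apply/subsetP => _ /pidealP[u ->]; apply: idealMl. Qed.

Lemma image_is_ideal (V : finLmodType R) (f : V -> R) :
  {morph f : u v / u + v} -> (forall r u, f (r *: u) = r * f u) ->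
  is_ideal (f @: setT).
Proof.
move=> fD fZ; apply/idealP; split=> [|_ _ /imsetP[u _ ->] /imsetP[v _ ->]|r _ /imsetP[u _ ->]].
- by apply/imsetP; exists 0 => //; rewrite -(scale0r 0) fZ mul0r.
- by rewrite -fD imset_f ?inE.
- by rewrite -fZ imset_f ?inE.
Qed.

Lemma maximal_pideal_bezout gamma z :
  maximal_pideal gamma -> z \notin pideal gamma ->
  exists x w, 1 = gamma * x + z * w.
Proof.
move=> [_ gamma_max] z_notin.
pose J := [set gamma * x + z * w | x : R, w : R].
have J_ideal : is_ideal J.
  apply/idealP; split=> [|_ _ /imset2P[x1 w1 _ _ ->] /imset2P[x2 w2 _ _ ->]|r _ /imset2P[x w _ _ ->]].
  - by apply/imset2P; exists 0 0; rewrite ?inE // !mulr0 addr0.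
  - by apply/imset2P; exists (x1 + x2) (w1 + w2); rewrite ?inE // !mulrDr addrACA.
  - by apply/imset2P; exists (r * x) (r * w); rewrite ?inE // mulrDr ![r * (_ * _)]mulrCA.
have gammaJ : pideal gamma \subset J.
  by apply/subsetP => _ /pidealP[x ->]; apply/imset2P; exists x 0; rewrite ?inE // mulr0 addr0 mulrC.
have zJ : z \in J by apply/imset2P; exists 0 1; rewrite ?inE // mulr0 add0r mulr1.
have [J_eq|J_eq] := gamma_max J J_ideal gammaJ; first by rewrite -J_eq zJ in z_notin.
have /imset2P[x w _ _ ->] : 1 \in J by rewrite J_eq inE.
by exists x, w.
Qed.

Lemma coset_reps_inj gamma q (e : 'I_q -> R) i j :
  coset_reps gamma e -> e i - e j \in pideal gamma -> i = j.
Proof.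
move=> reps eij; have [i0 [_ uniq_i0]] := reps (e i).
by rewrite -(uniq_i0 i) ?(uniq_i0 j) // subrr ideal0 ?pideal_is_ideal.
Qed.

End Ideals.

Section ChainRing.
Variables (R : finComNzRingType) (gamma : R) (s q : nat) (e : 'I_q -> R).
Hypotheses (gamma_max : maximal_pideal gamma) (s_gt0 : (0 < s)%N).
Hypotheses (gamma_nil : gamma ^+ s = 0) (gamma_top_neq0 : gamma ^+ s.-1 != 0).
Hypothesis reps : coset_reps gamma e.

Local Notation socle := (pideal (gamma ^+ s.-1)).

Let gamma_topS : gamma ^+ s.-1.+1 = 0.
Proof. by rewrite prednK. Qed.

Lemma top_power_annihilator w : gamma ^+ s.-1 * w = 0 -> w \in pideal gamma.
Proof.
move=> top_w; apply: contraT => /(maximal_pideal_bezout gamma_max)[x [u bezout]].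
move: gamma_top_neq0; rewrite -[gamma ^+ s.-1]mulr1 bezout mulrDr mulrA -exprSr.
by rewrite gamma_topS mul0r add0r mulrA top_w mul0r eqxx.
Qed.

Lemma gamma_expansion_inj :
  injective (fun d : {ffun 'I_s -> 'I_q} => \sum_(i < s) e (d i) * gamma ^+ i).
Proof.
move=> d d' /eqP; rewrite -subr_eq0 -sumrB => /eqP sum_eq0.
suff digits_eq n (i : 'I_s) : (i < n)%N -> d i = d' i.
  by apply/ffunP => i; apply: (digits_eq s).
elim: n i => // n IHn i; rewrite ltnS leq_eqVlt => /predU1P[i_eq|]; last exact: IHn.
apply/(coset_reps_inj reps)/top_power_annihilator.
have le_i_top : (i <= s.-1)%N by rewrite -ltnS prednK.
have /(congr1 (fun x => x * gamma ^+ (s.-1 - i))) := sum_eq0.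
rewrite mul0r mulr_suml (bigD1 i) //= big1 ?addr0 => [|j neq_ji].
  by rewrite -mulrBl -mulrA -exprD subnKC // mulrC.
have [lt_ji|lt_ij] := ltnP j i; first by rewrite IHn -?i_eq // subrr !mul0r.
have le_s : (s <= j + (s.-1 - i))%N.
  by move: lt_ij; rewrite leq_eqVlt eq_sym val_eqE (negbTE neq_ji) /=; lia.
by rewrite -mulrBl -mulrA -exprD -(subnK le_s) exprD gamma_nil !mulr0.
Qed.

Lemma card_chain_ring (dig : R -> 'I_s -> 'I_q) :
  gamma_digits gamma e dig -> #|R| = (q ^ s)%N.
Proof.
move=> digits; have <- : #|{ffun 'I_s -> 'I_q}| = (q ^ s)%N by rewrite card_ffun !card_ord.
apply/eqP; rewrite eqn_leq; apply/andP; split; last exact: leq_card gamma_expansion_inj.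
apply: (@leq_card _ _ (fun r => [ffun i => dig r i])) => r r' /ffunP eq_dig.
by rewrite (digits r) (digits r'); apply: eq_bigr => i _; have := eq_dig i; rewrite !ffunE => ->.
Qed.

Lemma socleE : socle = [set e i * gamma ^+ s.-1 | i : 'I_q].
Proof.
apply/setP => x; apply/pidealP/imsetP => [[y ->]|[i _ ->]]; last by exists (e i).
have [i [/pidealP[z rep_z] _]] := reps y.
by exists i => //; rewrite -(subrK (e i) y) rep_z mulrDl -mulrA -exprS gamma_topS mulr0 add0r.
Qed.

Lemma card_socle : #|socle| = q.
Proof.
rewrite socleE card_imset ?card_ord // => i j eq_ij.
apply/(coset_reps_inj reps)/top_power_annihilator.
by rewrite mulrBr ![gamma ^+ _ * _]mulrC eq_ij subrr.
Qed.

Hypothesis chain : chain_ring R.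

Lemma socle_subset I y : is_ideal I -> y \in I -> y != 0 -> socle \subset I.
Proof.
move=> I_ideal yI y_neq0.
have [//|/subsetP/(_ y yI)/pidealP[z y_def]] := chain (pideal_is_ideal (gamma ^+ s.-1)) I_ideal.
apply: pideal_subset => //.
have /(maximal_pideal_bezout gamma_max)[x [w bezout]] : z \notin pideal gamma.
  by apply: contra y_neq0 => /pidealP[u z_def]; rewrite y_def z_def -mulrA -exprS gamma_topS mulr0.
have -> : gamma ^+ s.-1 = w * y.
  rewrite -[LHS]mul1r bezout mulrDl mulrAC -exprS gamma_topS mul0r add0r.
  by rewrite mulrAC -y_def mulrC.
exact: idealMl.
Qed.

(* Scaling by q removes the exponent s - 2, which truncated subtraction turns
   into junk when s = 1; then the last branch is vacuous, as socle = R. *)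
Lemma mul_wHom y :
  (q * wHom q s gamma y =
   if y == 0%R then 0 else if y \in socle then q ^ s else (q - 1) * q ^ s.-1)%N.
Proof.
rewrite /wHom; case: (y == 0); first by rewrite muln0.
case: ifP => [_|y_notin]; first by rewrite -expnS prednK.
have s_gt1 : (1 < s)%N.
  rewrite ltn_neqAle s_gt0 andbT; apply: contraFneq y_notin => s1.
  by apply/pidealP; exists y; rewrite -s1 expr0 mulr1.
by rewrite mulnCA -expnS; congr (_ * q ^ _)%N; lia.
Qed.

Lemma sum_wHom_ideal I y : is_ideal I -> y \in I -> y != 0 ->
  (q * \sum_(x in I) wHom q s gamma x = (q - 1) * q ^ s.-1 * #|I|)%N.
Proof.
move=> I_ideal yI y_neq0; have socleI := socle_subset I_ideal yI y_neq0.
have socle0 : 0 \in socle := ideal0 (pideal_is_ideal _).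
have q_le_I : (q <= #|I|)%N by rewrite -card_socle subset_leq_card.
rewrite big_distrr (big_setID socle) /= (setIidPr socleI) (big_setD1 0) //=.
rewrite mul_wHom eqxx add0n.
rewrite (eq_bigr (fun=> q ^ s)%N) => [|x /setD1P[x_neq0 x_in]]; last first.
  by rewrite mul_wHom (negbTE x_neq0) x_in.
rewrite [X in (_ + X)%N](eq_bigr (fun=> (q - 1) * q ^ s.-1)%N) => [|x /setDP[_ x_notin]]; last first.
  have x_neq0 : x != 0 by apply: contraNneq x_notin => ->.
  by rewrite mul_wHom (negbTE x_neq0) (negbTE x_notin).
have := cardsD1 0 socle; rewrite socle0 card_socle add1n => card_socleD1.
rewrite !sum_nat_const cardsD (setIidPr socleI) card_socle -(prednK s_gt0) expnS /=.
rewrite card_socleD1 in q_le_I *.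
by rewrite subn1 /= mulnCA -mulnDl subnKC // mulnC.
Qed.

Lemma sum_wHom_linear (V : finLmodType R) (f : V -> R) u :
  {morph f : v w / v + w} -> (forall r v, f (r *: v) = r * f v) -> f u != 0 ->
  (q * \sum_v wHom q s gamma (f v) = (q - 1) * q ^ s.-1 * #|V|)%N.
Proof.
move=> fD fZ fu_neq0.
have card_V : #|V| = (#|[set v | f v == 0%R]| * #|f @: setT|)%N.
  by have := sum_fibers (fun=> 1%N) fD; rewrite !sum1_card.
rewrite (sum_fibers _ fD) mulnCA.
rewrite (sum_wHom_ideal (image_is_ideal fD fZ) (imset_f _ (in_setT u)) fu_neq0).
by rewrite card_V mulnCA.
Qed.

End ChainRing.

Section GeneratorMatrix.
Variables (R : finComNzRingType) (rhos : seq R).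
Hypotheses (rhos_uniq : uniq rhos) (rhos_all : forall x : R, x \in rhos).

Let size_rhos : size rhos = #|R|.
Proof. by rewrite -(card_uniqP rhos_uniq); apply: eq_card. Qed.

(* Column j of G_k lists, through rhos, the k base-|R| digits of j. *)
Lemma Gent_inj k j j' : (j < #|R| ^ k)%N -> (j' < #|R| ^ k)%N ->
  (forall i, (i < k)%N -> Gent rhos k i j = Gent rhos k i j') -> j = j'.
Proof.
have card_gt0 : (0 < #|R|)%N by apply/card_gt0P; exists 0.
elim: k j j' => [|k IHk] j j'; first by rewrite expn0 !ltnS !leqn0 => /eqP-> /eqP->.
have Rk_gt0 : (0 < #|R| ^ k)%N by rewrite expn_gt0 card_gt0.
rewrite expnS => lt_j lt_j' eq_col.
have eq_div : (j %/ #|R| ^ k = j' %/ #|R| ^ k)%N.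
  apply/eqP; rewrite -(nth_uniq 0 _ _ rhos_uniq) ?size_rhos ?ltn_divLR //.
  by apply/eqP/(eq_col 0%N).
have eq_mod : (j %% #|R| ^ k = j' %% #|R| ^ k)%N.
  by apply: IHk; rewrite ?ltn_pmod // => i lt_ik; apply: (eq_col i.+1).
by rewrite (divn_eq j (#|R| ^ k)) eq_div eq_mod -divn_eq.
Qed.

Lemma Gmx_col_bij k : bijective (fun j => col j (Gmx rhos k)).
Proof.
apply: inj_card_bij; last by rewrite card_mx card_ord muln1.
move=> j j' /matrixP eq_col; apply/val_inj/(Gent_inj (ltn_ord j) (ltn_ord j')) => i lt_ik.
by have := eq_col (Ordinal lt_ik) 0; rewrite !mxE.
Qed.

End GeneratorMatrix.

Theorem proposition3p14
  (R : finComNzRingType) (gamma : R) (s q : nat)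
  (e : 'I_q -> R) (dig : R -> 'I_s -> 'I_q) (rhos : seq R) (k : nat)
  (Hchain : chain_ring R)
  (Hmax : maximal_pideal gamma)
  (Hs : (0 < s)%N) (Hnil : gamma ^+ s = 0) (Hnil' : gamma ^+ s.-1 != 0)
  (Hq : (1 < q)%N)
  (Hreps : coset_reps gamma e)
  (He0 : forall i : 'I_q, nat_of_ord i = 0%N -> e i = 0)
  (He1 : forall i : 'I_q, nat_of_ord i = 1%N -> e i = 1)
  (Hdig : gamma_digits gamma e dig)
  (Hrhos_all : forall x : R, x \in rhos)
  (Hrhos_uniq : uniq rhos)
  (Hrhos_sorted : sorted (Rlt dig) rhos)
  (Hk : (1 <= k)%N)
  (c : 'rV[R]_(#|R| ^ k)) (Hc : c \in Scode rhos k) (Hc0 : c != 0) :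
  wHom_vec q s gamma c = (q ^ (s * (k + 1) - 2) * (q - 1))%N.
Proof.
have [a c_def] : exists a, c = a *m Gmx rhos k.
  by move: Hc; rewrite inE => /existsP[a /eqP]; exists a.
pose f (x : 'cV[R]_k) := (a *m x) 0 0.
have fD : {morph f : x y / x + y} by move=> x y; rewrite /f mulmxDr mxE.
have fZ r x : f (r *: x) = r * f x by rewrite /f -scalemxAr mxE.
have cE j : c 0 j = f (col j (Gmx rhos k)).
  by rewrite c_def /f !mxE; apply: eq_bigr => i _; rewrite !mxE.
have [j cj_neq0] : exists j, c 0 j != 0.
  apply/existsP; apply: contraNT Hc0 => /existsPn c_eq0.
  by apply/eqP/rowP => j; rewrite mxE; apply/eqP/negbNE.
have wHom_c : wHom_vec q s gamma c = \sum_x wHom q s gamma (f x).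
  rewrite [RHS](reindex _ (onW_bij _ (Gmx_col_bij Hrhos_uniq Hrhos_all k))).
  by apply: eq_bigr => j' _; rewrite cE.
rewrite cE in cj_neq0.
apply/eqP; rewrite -(eqn_pmul2l (ltnW Hq)) wHom_c.
rewrite (sum_wHom_linear Hmax Hs Hnil Hnil' Hreps Hchain fD fZ cj_neq0).
rewrite card_mx muln1 (card_chain_ring Hmax Hs Hnil Hnil' Hreps Hdig) -expnM.
apply/eqP; rewrite -mulnA -expnD mulnA -expnS mulnC; congr (q ^ _ * _)%N; lia.
Qed.
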